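(* Let $n\ge2$ and let $Q$ be an $n$-pre-admissible quiver. Then there exists a flow path in $Q$ if and only if $Q\neq A_1$ and $Q\ne\tilde{A}_m$ for every $m\ge1$.
   Context: Quivers are finite and connected. $\delta(v)=(\delta^-(v),\delta^+(v))$ counts arrows ending/starting at $v$. $Q$ is $n$-pre-admissible if (i) every $\delta(v)\in\{(0,0),(0,1),(1,0),(1,1),(1,2),(2,1)\}$, with $(2,2)$ also allowed when $n=2$; (ii) at most one arrow from any vertex to any vertex; (iii) $\delta^+(v)+\delta^-(u)\le3$ for every arrow $v\to u$. A ($k$-)flow path ($k\ge2$) is a path $v_1\to v_2\to\cdots\to v_k$ in $Q$ such that $\delta(v_s)=(1,1)$ if and only if $1<s<k$. $A_1$ is the one-vertex quiver without arrows; $\tilde A_m$ is the oriented cycle $1\to\cdots\to m\to1$ (a loop if $m=1$). *)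

From mathcomp Require Import all_boot.
Set Implicit Arguments. Unset Strict Implicit. Unset Printing Implicit Defensive.

Record quiver := Quiver {
  qV : finType;
  qA : finType;
  qs : qA -> qV;
  qt : qA -> qV }.

Section QuiverDefs.
Variable Q : quiver.

Definition din (v : qV Q) : nat := #|[set a : qA Q | qt a == v]|.
Definition dout (v : qV Q) : nat := #|[set a : qA Q | qs a == v]|.

Definition adj : rel (qV Q) := fun u v =>
  [exists a : qA Q, ((qs a == u) && (qt a == v)) || ((qs a == v) && (qt a == u))].

Definition connected_quiver : Prop :=
  0 < #|qV Q| /\ forall u v : qV Q, connect adj u v.

Definition allowed_degree (n : nat) (d : nat * nat) : bool :=
  (d \in [:: (0,0); (0,1); (1,0); (1,1); (1,2); (2,1)]) || ((n == 2) && (d == (2,2))).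

Definition pre_admissible (n : nat) : Prop :=
  (forall v : qV Q, allowed_degree n (din v, dout v)) /\
  (forall u v : qV Q, #|[set a : qA Q | (qs a == u) && (qt a == v)]| <= 1) /\
  (forall a : qA Q, dout (qs a) + din (qt a) <= 3).

(* A path given by its first arrow a0 and the remaining arrows p;
   its vertex sequence is v_1 = s a0, then the targets of the arrows. *)
Definition path_vertices (a0 : qA Q) (p : seq (qA Q)) : seq (qV Q) :=
  qs a0 :: map (@qt Q) (a0 :: p).

Definition is_flow_path (a0 : qA Q) (p : seq (qA Q)) : Prop :=
  path (fun a b => qt a == qs b) a0 p /\
  let vs := path_vertices a0 p in
  forall i, i < size vs ->
    ((din (nth (qs a0) vs i) == 1) && (dout (nth (qs a0) vs i) == 1))
    = (0 < i < (size vs).-1).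

(* a flow path exists (k >= 2 means at least one arrow) *)
Definition has_flow_path : Prop :=
  exists (a0 : qA Q) (p : seq (qA Q)), is_flow_path a0 p.

End QuiverDefs.

Definition quiver_iso (Q1 Q2 : quiver) : Prop :=
  exists (f : qV Q1 -> qV Q2) (g : qA Q1 -> qA Q2),
    bijective f /\ bijective g /\
    (forall a, qs (g a) = f (qs a)) /\ (forall a, qt (g a) = f (qt a)).

Definition A1 : quiver := @Quiver unit void (fun a => match a with end)
                                              (fun a => match a with end).

Lemma ord_pos m (i : 'I_m) : 0 < m.
Proof. by apply: leq_ltn_trans (ltn_ord i). Qed.

Definition cyc_succ m (i : 'I_m) : 'I_m :=
  Ordinal (ltn_pmod i.+1 (ord_pos i)).

(* tilde A_m: oriented cycle 1 -> ... -> m -> 1 (loop if m = 1), for m >= 1;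
   arrow i goes from vertex i to vertex i+1 mod m *)
Definition Atilde (m : nat) : quiver :=
  @Quiver 'I_m 'I_m id (@cyc_succ m).

From Pilot Require Import Defs.
(* A flow path starts at a vertex whose degree is not (1,1) and has at least
   one arrow, so neither A_1 (no arrows) nor an oriented cycle (all degrees
   (1,1)) has one.  Conversely, suppose some vertex w of degree other than
   (1,1) has an outgoing arrow, and keep following outgoing arrows from w.
   While the walk stays on (1,1)-vertices, in-degree 1 makes each step
   reversible, so the walk could only close up by returning to w, which is not
   a (1,1)-vertex; hence it reaches a vertex of degree other than (1,1), and
   the first one ends a flow path.  Otherwise every vertex of degree other than
   (1,1) is a sink, and counting arrows by sources and by targets shows it is
   isolated.  By connectedness Q is then either a single vertex without arrows,
   i.e. A_1, or has only (1,1)-vertices, whose successor map is a cyclic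
   permutation, i.e. Q is an oriented cycle. *)

From Pilot Require Import Defs.
From mathcomp Require Import all_boot.
From Stdlib Require Import Classical.

Set Implicit Arguments.
Unset Strict Implicit.
Unset Printing Implicit Defensive.

Lemma iter_return (T : finType) (f : T -> T) (x : T) :
  (forall i j, iter i.+1 f x = iter j.+1 f x -> iter i f x = iter j f x) ->
  exists2 k, 0 < k & iter k f x = x.
Proof.
move=> iter_inj.
(* pigeonhole on the first #|T|.+1 iterates, then cancel the common prefix *)
have back i k : iter i f x = iter (i + k) f x -> iter k f x = x.
  elim: i => [|i IH]; first by rewrite add0n => <-.
  by rewrite addSn => /iter_inj.
have : ~~ injectiveb (fun i : 'I_#|T|.+1 => iter i f x).
  by apply/injectiveP => /leq_card; rewrite card_ord ltnn.
case/injectivePn=> i [j ne_ij eq_ij].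
wlog lt_ij : i j ne_ij eq_ij / i < j.
  move=> wlog_ij; have [||eq_ij'] := ltngtP i j; first exact: wlog_ij.
    by apply: wlog_ij; rewrite 1?eq_sym.
  by move: ne_ij; rewrite (val_inj eq_ij') eqxx.
exists (j - i); first by rewrite subn_gt0.
by apply: (back i); rewrite subnKC 1?ltnW.
Qed.

Lemma sum_card_fibers (A B : finType) (h : A -> B) :
  \sum_(b : B) #|[set a | h a == b]| = #|A|.
Proof.
rewrite -sum1_card (partition_big h predT) //=.
by apply: eq_bigr => b _; rewrite -sum1_card; apply: eq_bigl => a; rewrite inE.
Qed.

Section QuiverIso.
Variables (Q1 Q2 : quiver) (f : qV Q1 -> qV Q2) (g : qA Q1 -> qA Q2).
Hypotheses (f_inj : injective f) (g_bij : bijective g).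
Hypotheses (g_src : forall a, qs (g a) = f (qs a)) (g_tgt : forall a, qt (g a) = f (qt a)).

Lemma card_fiber_iso (h1 : qA Q1 -> qV Q1) (h2 : qA Q2 -> qV Q2) v :
  (forall a, h2 (g a) = f (h1 a)) ->
  #|[set a | h1 a == v]| = #|[set b | h2 b == f v]|.
Proof.
case: g_bij => g' gK g'K h_g.
rewrite -(card_imset _ (can_inj gK)); apply: eq_card => b.
rewrite inE; apply/imsetP/idP => [[a]|h2b].
  by rewrite inE => /eqP <- ->; rewrite h_g.
by exists (g' b); rewrite ?g'K // inE -(inj_eq f_inj) -h_g g'K.
Qed.

Lemma din_iso v : din (f v) = din v.
Proof. by rewrite /din (card_fiber_iso _ g_tgt). Qed.

Lemma dout_iso v : dout (f v) = dout v.
Proof. by rewrite /dout (card_fiber_iso _ g_src). Qed.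

End QuiverIso.

Lemma cyc_succE m : @cyc_succ m =1 @ordS m.
Proof. by move=> i; apply: val_inj. Qed.

Lemma din_Atilde m (i : 'I_m) : @din (Atilde m) i = 1.
Proof.
have succ_inj : injective (@cyc_succ m) by move=> j k; rewrite !cyc_succE => /ordS_inj.
rewrite /din -[RHS](cards1 i) -(card_preimset _ succ_inj).
by apply: eq_card => j; rewrite !inE.
Qed.

Lemma dout_Atilde m (i : 'I_m) : @dout (Atilde m) i = 1.
Proof. by rewrite /dout /=; apply: (eq_card1 (x:=i)) => j; rewrite inE. Qed.

Section Quiver.
Variable Q : quiver.
Implicit Types (v w : qV Q) (a b d : qA Q).

Definition deg11 v := (din v == 1) && (dout v == 1).

Lemma in_arrow_eq v a b : din v = 1 -> qt a = v -> qt b = v -> a = b.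
Proof.
move=> din1 av bv; apply: (card_le1_eqP (A := [set a | qt a == v])).
- by rewrite -/(din v) din1.
- by rewrite inE bv.
- by rewrite inE av.
Qed.

(* [d] is only a default, returned when [v] has no outgoing arrow. *)
Definition out_arrow d v := odflt d [pick a | qs a == v].

Lemma out_arrow_src d v : 0 < dout v -> qs (out_arrow d v) = v.
Proof.
rewrite /out_arrow; case: pickP => [a /eqP //|none].
by case/card_gt0P=> a; rewrite inE none.
Qed.

Definition next_vertex d v := qt (out_arrow d v).

Lemma out_arrow_eq d v a : dout v = 1 -> qs a = v -> a = out_arrow d v.
Proof.
move=> dout1 av; apply: (card_le1_eqP (A := [set a | qs a == v])).
- by rewrite -/(dout v) dout1.
- by rewrite inE out_arrow_src ?dout1.
- by rewrite inE av.
Qed.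

Lemma flow_path_of_walk (y : nat -> qV Q) (e : nat -> qA Q) k :
  0 < k -> (forall l, l < k -> qs (e l) = y l /\ qt (e l) = y l.+1) ->
  (forall l, l <= k -> deg11 (y l) = (0 < l < k)) -> has_flow_path Q.
Proof.
case: k => // k _ ends y11.
exists (e 0), [seq e l | l <- iota 1 k]; split.
  rewrite path_map; apply/(pathP 0) => i; rewrite size_iota => lt_ik.
  rewrite -[0 :: _]/(iota 0 k.+1) !nth_iota ?add0n //=; last exact: ltnW.
  by rewrite (proj2 (ends i _)) ?(proj1 (ends i.+1 _)) // ltnW.
have -> : path_vertices (e 0) [seq e l | l <- iota 1 k] = [seq y l | l <- iota 0 k.+2].
  rewrite /path_vertices -[e 0 :: _]/(map e (iota 0 k.+1)) -map_comp.
  rewrite -[RHS]/(y 0 :: map y (iota 1 k.+1)) (iotaDl 1 0) -map_comp.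
  rewrite (proj1 (ends 0 _)) //; congr (_ :: _); apply/eq_in_map => l.
  rewrite mem_iota add0n => lt_lk /=.
  by rewrite add1n (proj2 (ends l lt_lk)).
move=> vs i; rewrite {}/vs size_map size_iota => lt_i.
by rewrite (nth_map 0) ?size_iota // nth_iota // -/(deg11 _) y11.
Qed.

Section Walk.
Variables (d : qA Q) (w : qV Q).
Hypotheses (w_not11 : ~~ deg11 w) (w_out : 0 < dout w).

Let y k := iter k (next_vertex d) w.

Lemma walk_leaves_deg11 : exists k, (0 < k) && ~~ deg11 (y k).
Proof.
apply: NNPP => none.
have all11 k : 0 < k -> deg11 (y k).
  by move=> k_gt0; apply/negPn/negP => not11; apply: none; exists k; rewrite k_gt0.
have out_pos k : 0 < dout (y k).
  by case: k => [|k] //; case/andP: (all11 k.+1 isT) => _ /eqP->.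
have [k k_gt0 yk] : exists2 k, 0 < k & y k = w.
  apply: iter_return => i j eq_ij.
  have /andP [/eqP din1 _] := all11 i.+1 isT.
  change (y i = y j).
  rewrite -(out_arrow_src d (out_pos i)) -(out_arrow_src d (out_pos j)).
  by rewrite (in_arrow_eq din1 (erefl (y i.+1)) (esym eq_ij)).
by move: w_not11; rewrite -yk all11.
Qed.

Lemma flow_path_from : has_flow_path Q.
Proof.
have [k /andP [k_gt0 yk_not11] min_k] := ex_minnP walk_leaves_deg11.
have mid l : 0 < l < k -> deg11 (y l).
  case/andP=> l_gt0 lt_lk; apply/negPn/negP => not11.
  by have := min_k l; rewrite l_gt0 not11 leqNgt lt_lk => /(_ isT).
apply: (@flow_path_of_walk y (fun l => out_arrow d (y l)) k k_gt0).
  move=> l lt_lk; split=> //; apply: out_arrow_src.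
  case: l lt_lk => [//|l] lt_lk.
  by case/andP: (mid l.+1 lt_lk) => _ /eqP->.
move=> l le_lk; case: (posnP l) => [->|l_gt0]; first exact: negbTE.
have [lt_lk|ge_lk] := ltnP l k; first by rewrite mid ?l_gt0.
have -> : l = k by apply/eqP; rewrite eqn_leq le_lk ge_lk.
exact: negbTE.
Qed.

End Walk.

Lemma sum_din_dout : \sum_(v : qV Q) din v = \sum_(v : qV Q) dout v.
Proof. by rewrite /din /dout !sum_card_fibers. Qed.

Lemma din_eq0_of_dout_eq0 :
  (forall v, ~~ deg11 v -> dout v = 0) -> forall v, ~~ deg11 v -> din v = 0.
Proof.
move=> dout0 v v_not11.
have : \sum_(u | ~~ deg11 u) din u = 0.
  have := sum_din_dout; rewrite (bigID deg11) [RHS](bigID deg11) /=.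
  rewrite [X in _ = _ + X]big1 => [|u /dout0 //].
  by rewrite [X in X + _ = _](eq_bigr (@dout Q)) => [/addnI|u /andP [/eqP-> /eqP->]].
by move/eqP; rewrite sum_nat_eq0 => /forall_inP/(_ v v_not11)/eqP.
Qed.

Lemma iso_A1_of_isolated w :
  connected_quiver Q -> din w = 0 -> dout w = 0 -> quiver_iso Q A1.
Proof.
move=> [_ conn] din0 dout0.
have no_tgt a : qt a != w.
  by apply/eqP => aw; move: din0; rewrite /din (cardD1 a) inE aw eqxx.
have no_src a : qs a != w.
  by apply/eqP => aw; move: dout0; rewrite /dout (cardD1 a) inE aw eqxx.
have all_w v : v = w.
  have /connectP [[|u p] /=] := conn w v; first by move=> _ ->.
  by case/andP=> /existsP [a]; rewrite (negbTE (no_src a)) (negbTE (no_tgt a)) andbF.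
have no_arrow a : False by move: (no_src a); rewrite (all_w (qs a)) eqxx.
exists (fun _ => tt), (fun a => match no_arrow a with end).
split; first by exists (fun _ => w) => [v|[]] //; rewrite (all_w v).
split; first by exists (fun x : void => match x with end) => [a|[]]; case: (no_arrow a).
by split=> a; case: (no_arrow a).
Qed.

Section AllDeg11.
Variable d : qA Q.
Hypothesis all11 : forall v, deg11 v.

Lemma dout_all11 v : dout v = 1.
Proof. by case/andP: (all11 v) => _ /eqP. Qed.

Lemma out_arrow_src11 v : qs (out_arrow d v) = v.
Proof. by rewrite out_arrow_src ?dout_all11. Qed.

Lemma out_arrowK a : out_arrow d (qs a) = a.
Proof. by apply/esym/out_arrow_eq; rewrite ?dout_all11. Qed.

Lemma next_vertex_inj : injective (next_vertex d).
Proof.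
move=> u v eq_uv; rewrite -(out_arrow_src11 u) -(out_arrow_src11 v).
case/andP: (all11 (next_vertex d u)) => /eqP din1 _.
by rewrite (in_arrow_eq din1 (erefl _) (esym eq_uv)).
Qed.

Lemma fconnect_next_vertex u v : connect (@adj Q) u v -> fconnect (next_vertex d) u v.
Proof.
have step a : fconnect (next_vertex d) (qs a) (qt a).
  by apply/connect1/eqP; rewrite /next_vertex out_arrowK.
apply: connect_sub => x z /existsP [a /orP [] /andP [/eqP <- /eqP <-] //].
by rewrite fconnect_sym //; apply: next_vertex_inj.
Qed.

Lemma iso_Atilde_order v0 :
  (forall v, fconnect (next_vertex d) v0 v) ->
  quiver_iso Q (Atilde (order (next_vertex d) v0)).
Proof.
set succ := next_vertex d; set m := order succ v0 => conn.
pose f v : 'I_m := Ordinal (findex_max (conn v)).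
pose f' (i : 'I_m) := iter i succ v0.
have fK : cancel f f' by move=> v; rewrite /f' /= iter_findex.
have f'K : cancel f' f by move=> i; apply: val_inj; rewrite /= findex_iter.
have f_succ v : f (succ v) = cyc_succ (f v).
  apply: val_inj => /=; have lt_km := findex_max (conn v).
  rewrite -{1}(iter_findex (conn v)) -iterS; move: lt_km; set k := findex _ _ _.
  case: (ltngtP k.+1 m) => [lt_k1m _|//|k1m _].
    by rewrite findex_iter // modn_small.
  by rewrite k1m iter_order ?findex0 ?modnn //; apply: next_vertex_inj.
exists f, (fun a => f (qs a)); do !split => //.
- exact: Bijective fK f'K.
- exists (fun i => out_arrow d (f' i)) => [a|i]; first by rewrite fK out_arrowK.
  by rewrite out_arrow_src11.
- by move=> a /=; rewrite -f_succ /succ /next_vertex out_arrowK.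
Qed.

End AllDeg11.

Lemma iso_Atilde_of_deg11 :
  connected_quiver Q -> (forall v, deg11 v) -> exists2 m, 0 < m & quiver_iso Q (Atilde m).
Proof.
move=> [V_gt0 conn] all11; have [v0 _] := card_gt0P V_gt0.
have [d _] : exists d, d \in [set a | qs a == v0].
  by apply/card_gt0P; rewrite -/(dout v0) dout_all11.
exists (order (next_vertex d) v0) => //.
by apply: iso_Atilde_order => // v; apply: fconnect_next_vertex.
Qed.

End Quiver.

Theorem lemma2p13 (n : nat) (Q : quiver) :
  2 <= n -> connected_quiver Q -> pre_admissible Q n ->
  (has_flow_path Q <->
   (~ quiver_iso Q A1 /\ forall m : nat, 1 <= m -> ~ quiver_iso Q (Atilde m))).
Proof.
move=> _ conn _; split.
  case=> a0 [p [_ ends11]]; split; first by case=> f [g _]; case: (g a0).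
  move=> m _ [f [g [[f' fK f'K] [g_bij [g_src g_tgt]]]]].
  have f_inj := can_inj fK.
  move: (ends11 0 isT); rewrite /= -(din_iso f_inj g_bij g_tgt) -(dout_iso f_inj g_bij g_src).
  by rewrite din_Atilde dout_Atilde.
case=> not_A1 not_Atilde.
have [/existsP [w /andP [w_not11 w_out]] | no_source] :=
  boolP [exists w : qV Q, ~~ deg11 w && (0 < dout w)].
  by have [d _] := card_gt0P w_out; exact: (flow_path_from d w_not11 w_out).
have dout0 (v : qV Q) : ~~ deg11 v -> dout v = 0.
  move=> v_not11; apply/eqP; rewrite -leqn0 leqNgt.
  by move/existsPn: no_source => /(_ v); rewrite v_not11.
have [all11 | /forallPn [w w_not11]] := boolP [forall v : qV Q, deg11 v].
  have [m m_gt0 iso] := iso_Atilde_of_deg11 conn (forallP all11).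
  by case: (not_Atilde m m_gt0).
case: not_A1; apply: (iso_A1_of_isolated conn _ (dout0 w w_not11)).
exact: din_eq0_of_dout_eq0 dout0 w w_not11.
Qed.
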